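(* Let $n\in\mathbb{N}_0$ and $r\in\mathbb{N}$, let $I$ be an open interval, and let $f_i,g_i:I\to\mathbb{R}$ ($i=1,\ldots,r$) be functions which have a derivative of order $n$ on $I$. Suppose that $\sum_{i=1}^{r}g_i=0$ on $I$. Then, for every $\mathbf{s}=(s_1,\ldots,s_r)\in(\mathbb{Z}_{\ge 0})^r$ with $|\mathbf{s}|\le n$, \[ \sum_{|\mathbf{k}|=n}\binom{n}{\mathbf{k}}\prod_{i=1}^{r}\left(f_i g_i^{k_i}\right)^{(s_i)}= \begin{cases} 0, & |\mathbf{s}|<n,\\[2mm] n!\left(\prod_{i=1}^{r}f_i\right)\prod_{i=1}^{r}\left(g_i'\right)^{s_i}, & |\mathbf{s}|=n. \end{cases} \]
   Context: For $\mathbf{k}=(k_1,\ldots,k_r)\in\mathbb{Z}^r$, $|\mathbf{k}|=k_1+\cdots+k_r$. The sum $\sum_{|\mathbf{k}|=n}$ runs over all $\mathbf{k}\in(\mathbb{Z}_{\ge0})^r$ with $|\mathbf{k}|=n$, and $\binom{n}{\mathbf{k}}=\frac{n!}{k_1!\cdots k_r!\,(n-|\mathbf{k}|)!}$, which for $|\mathbf{k}|=n$ is the multinomial coefficient $\frac{n!}{k_1!\cdots k_r!}$. $h^{(s)}$ denotes the $s$-th derivative of $h$ (with $h^{(0)}=h$), and $g^0=1$. *)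

From mathcomp Require Import all_boot all_order all_algebra.
From mathcomp Require Import all_classical all_reals all_analysis.
Set Implicit Arguments. Unset Strict Implicit. Unset Printing Implicit Defensive.
Import Order.TTheory GRing.Theory Num.Theory.
Local Open Scope ring_scope.

Definition multinom {R : realType} (r n : nat) (k : 'I_r -> nat) : R :=
  (n`!)%:R / (\prod_(i < r) ((k i)`!)%:R).

(* By induction on s, (f g^k)^(s) = \sum_(j <= s) c_(s,j) k^_j g^(k-j) with
   coefficients c_(s,j) independent of k, c_(s,j) = 0 for j > s and
   c_(s,s) = f (g')^s.  The left-hand side is therefore n! times the
   coefficient of X^n in the product over i of the exponential generating
   functions of m |-> \sum_j c_(i,j) m^_j g_i^(m-j).  Each of these equals
   P_i(X) exp(g_i X) with P_i = \sum_(j <= s_i) c_(i,j) X^j, and the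
   exponentials cancel because \sum_i g_i = 0.  What remains is the
   coefficient of X^n in \prod_i P_i, a polynomial of degree at most |s|.
   All series are truncated at degree n, which is harmless modulo X^(n+1). *)

From mathcomp Require Import all_boot all_order all_algebra.
From mathcomp Require Import all_classical all_reals all_analysis.
From mathcomp Require Import ring zify.
Set Implicit Arguments.
Unset Strict Implicit.
Unset Printing Implicit Defensive.
Import Order.TTheory GRing.Theory Num.Theory numFieldNormedType.Exports.
Local Open Scope classical_set_scope.
Local Open Scope ring_scope.

Section PolyCoefficients.
Variable R : comNzRingType.

Lemma coef_prod_poly n r (A : 'I_r -> nat -> R) :
  (\prod_(i < r) \poly_(m < n.+1) A i m)`_n =
  \sum_(k : {ffun 'I_r -> 'I_n.+1} | (\sum_i (k i : nat) == n)%N)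
     \prod_i A i (k i).
Proof.
under eq_bigr do rewrite poly_def.
rewrite (bigA_distr_bigA (fun i (m : 'I_n.+1) => A i m *: 'X^m)) coef_sum.
rewrite [RHS]big_mkcond /=; apply: eq_bigr => k _.
have -> : \prod_i (A i (k i) *: 'X^(k i)) =
    (\prod_i A i (k i))%:P * 'X^(\sum_i (k i : nat)).
  rewrite -prodrXr rmorph_prod -big_split.
  by apply: eq_bigr => i _; rewrite -mul_polyC.
rewrite coefCM coefXn eq_sym.
by case: eqP => _; rewrite ?mulr1 ?mulr0.
Qed.

Lemma coefM_size_le (p q : {poly R}) a b :
  (size p <= a.+1)%N -> (size q <= b.+1)%N ->
  (p * q)`_(a + b) = p`_a * q`_b.
Proof.
move=> sp sq; have ab : (a < (a + b).+1)%N by rewrite ltnS leq_addr.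
rewrite coefM (bigD1 (Ordinal ab)) //= addKn big1 ?addr0 // => j ja.
have [jlt|jgt|jeq] := ltngtP j a; last by rewrite -val_eqE /= jeq eqxx in ja.
- by rewrite [q`__]nth_default ?mulr0 // (leq_trans sq) // ltn_subRL ltn_add2r.
- by rewrite nth_default ?mul0r // (leq_trans sp).
Qed.

Lemma size_prod_le I (rs : seq I) (P : I -> {poly R}) (s : I -> nat) :
  (forall i, size (P i) <= (s i).+1)%N ->
  (size (\prod_(i <- rs) P i)%R <= (\sum_(i <- rs) s i).+1)%N.
Proof.
move=> sP; elim: rs => [|i rs IH]; first by rewrite !big_nil size_poly1.
rewrite !big_cons (leq_trans (size_polyMleq _ _)) //.
by move: (sP i) IH; lia.
Qed.

Lemma coef_prod_size_le I (rs : seq I) (P : I -> {poly R}) (s : I -> nat) :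
  (forall i, size (P i) <= (s i).+1)%N ->
  (\prod_(i <- rs) P i)`_(\sum_(i <- rs) s i) = \prod_(i <- rs) (P i)`_(s i).
Proof.
move=> sP; elim: rs => [|i rs IH]; first by rewrite !big_nil coef1.
by rewrite !big_cons coefM_size_le ?IH ?size_prod_le.
Qed.

End PolyCoefficients.

Section TakePoly.
Variable R : fieldType.

Lemma take_polyM m (p q : {poly R}) :
  take_poly m (p * q) = take_poly m (take_poly m p * take_poly m q).
Proof.
rewrite !Pdiv.IdomainMonic.take_poly_modp.
by rewrite modp_mul [in RHS]mulrC modp_mul mulrC.
Qed.

Lemma eq_take_poly_prod m I (rs : seq I) (P : pred I) (F G : I -> {poly R}) :
  (forall i, P i -> take_poly m (F i) = take_poly m (G i)) ->
  take_poly m (\prod_(i <- rs | P i) F i) =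
  take_poly m (\prod_(i <- rs | P i) G i).
Proof.
move=> FG; elim/big_rec2: _ => // i p q Pi pq.
by rewrite take_polyM [RHS]take_polyM FG // pq.
Qed.

End TakePoly.

Section ExponentialGeneratingPolynomial.
Variables (R : numFieldType) (n : nat).

Definition egf (u : nat -> R) : {poly R} := \poly_(m < n.+1) (u m / (m`!)%:R).

Definition trunc_exp (t : R) : {poly R} := egf (fun m => t ^+ m).

Lemma natr_fact_neq0 m : (m`!)%:R != 0 :> R.
Proof. by rewrite pnatr_eq0 -lt0n fact_gt0. Qed.

Lemma egf_sum q (c : nat -> R) (v : nat -> nat -> R) :
  egf (fun m => \sum_(j < q) c j * v j m) = \sum_(j < q) c j *: egf (v j).
Proof.
apply/polyP => m; rewrite coef_poly coef_sum.
under [RHS]eq_bigr do rewrite coefZ coef_poly.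
case: ltnP => _; last by rewrite big1 // => j _; rewrite mulr0.
by rewrite mulr_suml; apply: eq_bigr => j _; rewrite mulrA.
Qed.

Lemma take_poly_Xn_trunc_exp j t :
  take_poly n.+1 ('X^j * trunc_exp t) =
  egf (fun m => (m ^_ j)%:R * t ^+ (m - j)).
Proof.
apply/polyP => m; rewrite coef_take_poly coefXnM !coef_poly.
case: ltnP => // mn; case: ltnP => [mj|jm]; first by rewrite ffact_small ?mul0r.
rewrite (leq_ltn_trans (leq_subr j m) mn) -(ffact_fact jm) natrM invfM.
by rewrite mulrACA mulfV ?mul1r // pnatr_eq0 -lt0n ffact_gt0.
Qed.

Lemma egf_ffact q (c : nat -> R) t :
  egf (fun m => \sum_(j < q) c j * ((m ^_ j)%:R * t ^+ (m - j))) =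
  take_poly n.+1 (\poly_(j < q) c j * trunc_exp t).
Proof.
rewrite poly_def mulr_suml take_poly_sum.
rewrite (egf_sum q c (fun j m => (m ^_ j)%:R * t ^+ (m - j))).
by apply: eq_bigr => j _; rewrite -scalerAl take_polyZ take_poly_Xn_trunc_exp.
Qed.

Lemma size_egf u : (size (egf u) <= n.+1)%N.
Proof. exact: size_poly. Qed.

Lemma trunc_exp0 : trunc_exp 0 = 1.
Proof.
apply/polyP => m; rewrite coef_poly coef1 expr0n.
by case: m => [|m]; rewrite ?fact0 ?divr1 ?mul0r ?if_same.
Qed.

Lemma trunc_expD a b :
  take_poly n.+1 (trunc_exp a * trunc_exp b) = trunc_exp (a + b).
Proof.
apply/polyP => m; rewrite coef_take_poly coefM coef_poly.
case: ltnP => // mn; rewrite addrC exprDn mulr_suml; apply: eq_bigr => i _.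
have im : (i <= m)%N by rewrite -ltnS.
rewrite !coef_poly (leq_ltn_trans im mn) (leq_ltn_trans (leq_subr i m) mn).
rewrite -(bin_fact im) -[_ *+ 'C(m, i)]mulr_natr !natrM.
have Ci : 'C(m, i)%:R != 0 :> R by rewrite pnatr_eq0 -lt0n bin_gt0.
have := natr_fact_neq0 i; have := natr_fact_neq0 (m - i).
by move=> f1 f2; field; rewrite f1 f2 Ci.
Qed.

Lemma take_poly_prod_trunc_exp I (rs : seq I) (y : I -> R) :
  take_poly n.+1 (\prod_(i <- rs) trunc_exp (y i)) =
  trunc_exp (\sum_(i <- rs) y i).
Proof.
elim: rs => [|i rs IH].
  by rewrite !big_nil trunc_exp0 take_poly_id ?size_poly1.
rewrite !big_cons take_polyM IH.
by rewrite [take_poly _ (trunc_exp _)]take_poly_id ?size_egf ?trunc_expD.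
Qed.

Lemma take_poly_prod_egf_ffact I (rs : seq I) (q : I -> nat) (c : I -> nat -> R)
    (y : I -> R) :
  \sum_(i <- rs) y i = 0 ->
  take_poly n.+1 (\prod_(i <- rs)
    egf (fun m => \sum_(j < q i) c i j * ((m ^_ j)%:R * y i ^+ (m - j))))
  = take_poly n.+1 (\prod_(i <- rs) \poly_(j < q i) c i j).
Proof.
move=> y0; under eq_bigr do rewrite egf_ffact.
rewrite (@eq_take_poly_prod _ _ _ _ _ _
    (fun i => \poly_(j < q i) c i j * trunc_exp (y i))); last first.
  by move=> i _; exact: take_poly_id (size_take_poly _ _).
rewrite big_split /= take_polyM take_poly_prod_trunc_exp y0 trunc_exp0.
by rewrite mulr1 [LHS]take_poly_id // size_take_poly.
Qed.

End ExponentialGeneratingPolynomial.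

Section MultinomialSums.
Variable R : realType.

Lemma sum_multinom_prod n r (u : 'I_r -> nat -> R) :
  \sum_(k : {ffun 'I_r -> 'I_n.+1} | (\sum_i (k i : nat) == n)%N)
    multinom n (fun i => (k i : nat)) * \prod_i u i (k i)
  = (n`!)%:R * (\prod_i egf n (u i))`_n.
Proof.
rewrite coef_prod_poly mulr_sumr; apply: eq_bigr => k _.
by rewrite /multinom prodf_div -mulrA [_^-1 * _]mulrC.
Qed.

Lemma sum_multinom_prod_ffact n r (s : 'I_r -> nat) (c : 'I_r -> nat -> R)
    (y : 'I_r -> R) :
  \sum_i y i = 0 -> (\sum_i s i <= n)%N ->
  \sum_(k : {ffun 'I_r -> 'I_n.+1} | (\sum_i (k i : nat) == n)%N)
    multinom n (fun i => (k i : nat)) *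
    \prod_i \sum_(j < (s i).+1)
      c i j * (((k i : nat) ^_ j)%:R * y i ^+ (k i - j))
  = if (\sum_i s i < n)%N then 0 else (n`!)%:R * \prod_i c i (s i).
Proof.
move=> y0 sn.
rewrite (sum_multinom_prod _ (fun i m =>
  \sum_(j < (s i).+1) c i j * ((m ^_ j)%:R * y i ^+ (m - j)))) /=.
have -> : forall p : {poly R}, p`_n = (take_poly n.+1 p)`_n.
  by move=> p; rewrite coef_take_poly ltnSn.
rewrite take_poly_prod_egf_ffact // coef_take_poly ltnSn.
have sP i : (size (\poly_(j < (s i).+1) c i j) <= (s i).+1)%N.
  exact: size_poly.
case: ltnP => [lt_sn|ge_sn].
  by rewrite nth_default ?mulr0 // (leq_trans (size_prod_le _ sP)).
have sn' : (\sum_i s i)%N = n by apply/eqP; rewrite eqn_leq sn ge_sn.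
rewrite -[in X in _ * X]sn' coef_prod_size_le //.
by congr (_ * _); apply: eq_bigr => i _; rewrite coef_poly ltnSn.
Qed.

End MultinomialSums.

Lemma open_ereal_itv (R : realType) (a b : \bar R) :
  open [set x : R | (a < x%:E < b)%E].
Proof.
have -> : [set x : R | (a < x%:E < b)%E] =
    [set x | a < x%:E]%E `&` [set x | x%:E < b]%E.
  by apply/seteqP; split => x /=; [move/andP|move=> [-> ->]].
by apply: openI; [exact: open_ereal_gt|exact: open_ereal_lt].
Qed.

Section DerivableUpTo.
Variables (R : realType) (U : set R).
Hypothesis U_open : open U.

Definition derivable_upto q (h : R -> R) :=
  forall m y, (m < q)%N -> U y -> derivable (derive1n m h) y 1.

Lemma derive1_eq_on (h1 h2 : R -> R) : (forall y, U y -> h1 y = h2 y) ->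
  forall y, U y -> derive1 h1 y = derive1 h2 y.
Proof.
move=> h12 y Uy; rewrite !derive1E; apply: near_eq_derive.
by apply: filterS (open_nbhs_nbhs (conj U_open Uy)) => z /h12.
Qed.

Lemma derive1n_eq_on (h1 h2 : R -> R) : (forall y, U y -> h1 y = h2 y) ->
  forall m y, U y -> derive1n m h1 y = derive1n m h2 y.
Proof.
move=> h12; elim=> [|m IH] y Uy; first exact: h12.
by rewrite !derive1nS; apply: derive1_eq_on.
Qed.

Lemma derivable_upto_eq_on q (h1 h2 : R -> R) :
  (forall y, U y -> h1 y = h2 y) -> derivable_upto q h1 -> derivable_upto q h2.
Proof.
move=> h12 dh1 m y mq Uy; apply: near_eq_derivable (dh1 m y mq Uy).
apply: filterS (open_nbhs_nbhs (conj U_open Uy)) => z Uz.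
exact: derive1n_eq_on.
Qed.

Lemma derivable_uptoS q h : derivable_upto q.+1 h <->
  (forall y, U y -> derivable h y 1) /\ derivable_upto q (derive1 h).
Proof.
split=> [dh|[dh0 dh] [|m] y mq Uy]; last 2 first.
- exact: dh0.
- by rewrite derive1Sn; apply: dh.
split=> [y Uy|m y mq Uy]; first exact: (dh 0%N).
by rewrite -derive1Sn; apply: dh.
Qed.

Lemma derivable_upto_le p q h : (p <= q)%N ->
  derivable_upto q h -> derivable_upto p h.
Proof. by move=> pq dh m y mp; apply: dh; apply: leq_trans pq. Qed.

Lemma derivable_upto_cst q (c : R) : derivable_upto q (fun=> c).
Proof.
elim: q c => [//|q IH] c; apply/derivable_uptoS; split=> [y _|].
  exact: derivable_cst.
by rewrite (_ : derive1 _ = fun=> 0) //; apply/funext => y; exact: derive1_cst.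
Qed.

Lemma derivable_uptoD q h k : derivable_upto q h -> derivable_upto q k ->
  derivable_upto q (fun y => h y + k y).
Proof.
elim: q h k => [//|q IH] h k /derivable_uptoS[dh0 dh] /derivable_uptoS[dk0 dk].
apply/derivable_uptoS; split=> [y Uy|].
  exact: derivableD (dh0 y Uy) (dk0 y Uy).
apply: (@derivable_upto_eq_on _ (fun y => derive1 h y + derive1 k y)).
  by move=> y Uy; rewrite !derive1E deriveD //; [exact: dh0|exact: dk0].
exact: IH.
Qed.

Lemma derivable_uptoM q h k : derivable_upto q h -> derivable_upto q k ->
  derivable_upto q (fun y => h y * k y).
Proof.
elim: q h k => [//|q IH] h k dh dk.
have dh' := derivable_upto_le (leqnSn q) dh.
have dk' := derivable_upto_le (leqnSn q) dk.
move/derivable_uptoS: dh => [dh0 dh]; move/derivable_uptoS: dk => [dk0 dk].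
apply/derivable_uptoS; split=> [y Uy|].
  exact: derivableM (dh0 y Uy) (dk0 y Uy).
apply: (@derivable_upto_eq_on _
  (fun y => h y * derive1 k y + k y * derive1 h y)).
  by move=> y Uy; rewrite !derive1E deriveM //; [exact: dh0|exact: dk0].
by apply: derivable_uptoD; apply: IH.
Qed.

End DerivableUpTo.

Lemma is_derive_mul_scaled_pow (R : realType) (h p : R -> R) (c : R) m y :
  derivable h y 1 -> derivable p y 1 ->
  is_derive y 1 (fun z => h z * (c * p z ^+ m))
    (derive1 h y * (c * p y ^+ m) +
     h y * (c * (m%:R * p y ^+ m.-1 * derive1 p y))).
Proof.
move=> /derivableP dh /derivableP dp.
have := is_deriveM dh (is_deriveM (is_derive_cst c y 1) (is_deriveX m dp)).
rewrite (_ : (fun z => _) = h * (cst c * p ^+ m)); last first.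
  by apply/funext => z; rewrite /= exprfctE.
move=> D; apply: is_derive_eq; rewrite !derive1E /= exprfctE /=.
rewrite scaler0 addr0 /GRing.scale /= (_ : (cst c * _) y = c * p y ^+ m) //.
ring.
Qed.

Section DerivativesOfPowers.
Variables (R : realType) (f g : R -> R).

Fixpoint dpow_coef (s : nat) : nat -> R -> R :=
  match s with
  | 0 => fun j y => if j == 0%N then f y else 0
  | s'.+1 => fun j y => derive1 (dpow_coef s' j) y +
      (if j is j'.+1 then dpow_coef s' j' y * derive1 g y else 0)
  end.

Lemma dpow_coef_gt s j : (s < j)%N -> dpow_coef s j = fun=> 0.
Proof.
elim: s j => [|s IH] [|j] //= sj; apply/funext => y.
rewrite ltnS in sj; rewrite (IH j.+1 (ltnW sj)) (IH j sj) derive1_cst.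
by rewrite mul0r addr0.
Qed.

Lemma dpow_coef_diag s y : dpow_coef s s y = f y * derive1 g y ^+ s.
Proof.
elim: s y => [|s IH] y /=; first by rewrite mulr1.
by rewrite dpow_coef_gt // derive1_cst add0r IH exprSr mulrA.
Qed.

Variables (U : set R) (n : nat).
Hypotheses (U_open : open U).
Hypotheses (df : derivable_upto U n f) (dg : derivable_upto U n g).

Lemma derivable_upto_dpow_coef s j : (s <= n)%N ->
  derivable_upto U (n - s) (dpow_coef s j).
Proof.
elim: s j => [|s IH] j sn.
  by case: j => [|j] /=; rewrite ?subn0 //; exact: derivable_upto_cst.
have := IH j (ltnW sn); rewrite (_ : n - s = (n - s.+1).+1)%N; last by lia.
case/derivable_uptoS => _ dC; apply: (derivable_uptoD U_open dC).
case: j {dC} => [|j]; first exact: derivable_upto_cst.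
apply: (derivable_uptoM U_open).
  by apply: (derivable_upto_le _ (IH j (ltnW sn))); lia.
move: dg; rewrite (_ : n = n.-1.+1); last by lia.
by case/derivable_uptoS => _ dg'; apply: (derivable_upto_le _ dg'); lia.
Qed.

Lemma derive1n_mul_pow s k y : (s <= n)%N -> U y ->
  derive1n s (fun z => f z * g z ^+ k) y =
  \sum_(j < s.+1) dpow_coef s j y * ((k ^_ j)%:R * g y ^+ (k - j)).
Proof.
elim: s y => [|s IH] y sn Uy.
  by rewrite big_ord1 /= ffactn0 subn0 mul1r.
rewrite derive1nS (derive1_eq_on U_open (fun z Uz => IH z (ltnW sn) Uz)) //.
have dC j : derivable (derive1n 0 (dpow_coef s j)) y 1.
  by apply: derivable_upto_dpow_coef => //; lia.
have dgy : derivable (derive1n 0 g) y 1 by apply: dg => //; lia.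
have D := is_derive_sum (fun j : 'I_s.+1 =>
  is_derive_mul_scaled_pow ((k ^_ j)%:R) (k - j) (dC j) dgy).
rewrite derive1E (_ : (fun z => _) = \sum_(j < s.+1)
    (fun z => dpow_coef s j z * ((k ^_ j)%:R * g z ^+ (k - j)))); last first.
  by rewrite fct_sumE.
have [_ ->] := D; rewrite big_split /=.
under [RHS]eq_bigr do rewrite mulrDl; rewrite big_split /=; congr (_ + _).
  by rewrite [RHS]big_ord_recr /= dpow_coef_gt // derive1_cst mul0r addr0.
rewrite [RHS]big_ord_recl /= mul0r add0r; apply: eq_bigr => j _.
by rewrite /bump leq0n add1n ffactnSr subnS natrM; ring.
Qed.

End DerivativesOfPowers.

Theorem theorem1 (R : realType) (n r : nat) (a b : \bar R)
  (f g : 'I_r -> R -> R) (s : 'I_r -> nat) :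
  (0 < r)%N ->
  (a < b)%E ->
  (* f_i, g_i have a derivative of order n on the open interval I = (a,b) *)
  (forall (i : 'I_r) (m : nat) (x : R), (m < n)%N -> (a < x%:E < b)%E ->
     derivable (derive1n m (f i)) x 1 /\ derivable (derive1n m (g i)) x 1) ->
  (forall x : R, (a < x%:E < b)%E -> \sum_(i < r) g i x = 0) ->
  (\sum_(i < r) s i <= n)%N ->
  forall x : R, (a < x%:E < b)%E ->
    \sum_(k : {ffun 'I_r -> 'I_n.+1} | (\sum_(i < r) (k i : nat) == n)%N)
        multinom n (fun i => (k i : nat)) *
        \prod_(i < r) derive1n (s i) (fun y => f i y * g i y ^+ (k i : nat)) x
    = if (\sum_(i < r) s i < n)%N then 0
      else (n`!)%:R * (\prod_(i < r) f i x) *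
           \prod_(i < r) (derive1 (g i) x) ^+ (s i).
Proof.
move=> _ _ fg_derivable g_sum sn x xI.
have I_open := @open_ereal_itv R a b.
have df i : derivable_upto [set y | (a < y%:E < b)%E] n (f i).
  by move=> m y mn yI; case: (fg_derivable i m y mn yI).
have dg i : derivable_upto [set y | (a < y%:E < b)%E] n (g i).
  by move=> m y mn yI; case: (fg_derivable i m y mn yI).
have s_le i : (s i <= n)%N.
  by apply: leq_trans sn; rewrite (bigD1 i) //= leq_addr.
under eq_bigr => k _ do under eq_bigr => i _ do
  rewrite (derive1n_mul_pow I_open (df i) (dg i) _ (s_le i) xI).
rewrite (sum_multinom_prod_ffact (fun i j => dpow_coef (f i) (g i) (s i) j x)
  (g_sum x xI) sn).
case: ifP => // _; rewrite -mulrA -big_split /=.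
by congr (_ * _); apply: eq_bigr => i _; rewrite dpow_coef_diag.
Qed.
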